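(* Let $A$ be a central simple algebra of degree $n$ over a field $k$, let $r>1$ and $1\leqslant i_1<\cdots<i_r\leqslant n$ be integers, and let $I_1\subset A$ be a left ideal of $k$-dimension $ni_1$. Let $B=I_1^\circ/I_1^\circ I_1$ (a $k$-algebra). Then the map $$(I_2,\ldots,I_r)\mapsto\bigl(I_1^\circ I_2/I_1^\circ I_1,\ldots,I_1^\circ I_r/I_1^\circ I_1\bigr)$$ is a canonical bijection from the set of tuples of left ideals $I_1\subset I_2\subset\cdots\subset I_r\subset A$ with $\dim_k I_j=ni_j$ onto the set of tuples $J_2\subset\cdots\subset J_r$ of left ideals of $B$ with $\dim_k J_j=(n-i_1)(i_j-i_1)$.
   Context: $I^\circ=\{a\in A: Ia=0\}$ is the right annihilator; $UW$ denotes the $k$-span of products $uw$. $I_1^\circ I_1$ is a two-sided ideal of the (non-unital) ring $I_1^\circ$, so $I_1^\circ/I_1^\circ I_1$ is a ring; it is a central simple $k$-algebra of degree $n-i_1$. *)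

From HB Require Import structures.
From mathcomp Require Import all_boot all_order all_algebra all_field.
Set Implicit Arguments. Unset Strict Implicit. Unset Printing Implicit Defensive.
Import GRing.Theory.
Local Open Scope ring_scope.
Local Open Scope vspace_scope.

Section Defs.
Variables (k : fieldType) (A : falgType k).

Definition central_simple : Prop :=
  'Z({:A}) = 1%VS /\
  forall U : {vspace A}, ({:A} * U <= U)%VS -> (U * {:A} <= U)%VS ->
    U = 0%VS \/ U = {:A}%VS.

Definition left_ideal (I : {vspace A}) : bool := ({:A} * I <= I)%VS.

(* right annihilator I° = {a | I a = 0} = intersection of kernels of b |-> u*b, u in a basis of I *)
Definition rann (I : {vspace A}) : {vspace A} :=
  (\bigcap_(t < \dim I) lker (amull (tnth (vbasis I) t)))%VS.

(* tuples (I_2,...,I_r) (as a seq of size r-1) of left ideals with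
   I1 <= I_2 <= ... <= I_r and dim I_j = n * i_j *)
Definition ideal_flag (n r : nat) (i : nat -> nat) (I1 : {vspace A})
    (s : seq {vspace A}) : Prop :=
  [/\ size s = r.-1,
      path (fun U V : {vspace A} => (U <= V)%VS) I1 s,
      all left_ideal s &
      forall t, (t < r.-1)%N -> \dim (nth 0%VS s t) = (n * i t.+2)%N].

(* Left ideals of B = I1°/I1°I1 are represented by their preimages in I1°:
   subspaces J with I1°I1 <= J <= I1° and I1° J <= J; dim_k (J/I1°I1) = dim J - dim I1°I1. *)
Definition quot_flag (n r : nat) (i : nat -> nat) (I1 : {vspace A})
    (s : seq {vspace A}) : Prop :=
  [/\ size s = r.-1,
      path (fun U V : {vspace A} => (U <= V)%VS) (rann I1 * I1)%VS s,
      all (fun J => (J <= rann I1)%VS && (rann I1 * J <= J)%VS) s &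
      forall t, (t < r.-1)%N ->
        \dim (nth 0%VS s t) = (\dim (rann I1 * I1) + (n - i 1) * (i t.+2 - i 1))%N].

Definition flag_map (I1 : {vspace A}) (s : seq {vspace A}) : seq {vspace A} :=
  map (fun I => (rann I1 * I)%VS) s.

End Defs.

From HB Require Import structures.
From mathcomp Require Import all_boot all_order all_algebra all_field.
From mathcomp Require Import zify.
From Stdlib Require Import Classical.
Import GRing.Theory.
Local Open Scope ring_scope.
Set Implicit Arguments. Unset Strict Implicit.

(* A simple algebra is semisimple: every left ideal has a complementary left
   ideal, so I1 = A e for an idempotent e, and every nonzero left ideal is a
   direct sum of copies S0 a of one minimal left ideal S0.  Put f = 1 - e.  Then
   I1° = f A and I1° L = f L for every left ideal L, and L = I1 + A (f L)
   whenever I1 <= L; hence L |-> I1° L is injective on left ideals containing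
   I1, with inverse J |-> I1 + A J.  Counting copies of S0 gives
   dim (g L) * dim S0 = dim L * dim (g S0) for all g, so dim (f L) / dim L is
   dim (f A) / n^2 = (n - i1) / n, where dim (e A) = dim (A e) = n i1 is
   proved by the same decomposition applied to A e. *)

Section LeftIdeals.
Variables (k : fieldType) (A : falgType k).
Implicit Types (L S T C : {vspace A}) (x u v a e g : A).

Lemma fullv_neq0 : (fullv : {vspace A}) != 0%VS.
Proof. by rewrite -dimv_eq0 dimvf -lt0n; exact: FalgType_proper. Qed.

Lemma amullE u v : amull u v = u * v. Proof. by rewrite lfunE. Qed.
Lemma amulrE u v : amulr u v = v * u. Proof. by rewrite lfunE. Qed.

Lemma rannP L x : reflect (forall u, u \in L -> u * x = 0) (x \in rann L).
Proof.
apply: (iffP idP) => [xL u uL | Lx].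
  have basis_x (t : 'I_(\dim L)) : tnth (vbasis L) t * x = 0.
    move: xL; rewrite /rann memvE => /subv_bigcapP/(_ t isT).
    by rewrite -memvE memv_ker amullE => /eqP.
  rewrite (coord_vbasis uL) mulr_suml big1 // => t _.
  by rewrite -scalerAl -(tnth_nth 0) basis_x scaler0.
rewrite /rann memvE; apply/subv_bigcapP => t _; rewrite -memvE memv_ker amullE.
by rewrite Lx // vbasis_mem // mem_tnth.
Qed.

Lemma left_idealP L : reflect (forall a x, x \in L -> a * x \in L) (left_ideal L).
Proof.
apply: (iffP idP) => [hL a x xL | h]; last by apply/prodvP => a x _; apply: h.
by apply: (subvP hL); rewrite memv_mul ?memvf.
Qed.

Lemma left_ideal0 : left_ideal (0%VS : {vspace A}).
Proof. by apply/left_idealP => b y; rewrite memv0 => /eqP->; rewrite mulr0 mem0v. Qed.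

Lemma left_idealf : left_ideal (fullv : {vspace A}).
Proof. exact: subvf. Qed.

Lemma left_idealD L T : left_ideal L -> left_ideal T -> left_ideal (L + T)%VS.
Proof.
move=> /left_idealP hL /left_idealP hT; apply/left_idealP => b y.
by case/memv_addP => y1 y1L [y2 y2T ->]; rewrite mulrDr memv_add ?hL ?hT.
Qed.

Lemma left_idealI L T : left_ideal L -> left_ideal T -> left_ideal (L :&: T)%VS.
Proof.
move=> /left_idealP hL /left_idealP hT; apply/left_idealP => b y.
by rewrite !memv_cap => /andP[yL yT]; rewrite hL ?hT.
Qed.

Lemma left_ideal_fullM L : left_ideal (fullv * L)%VS.
Proof. by rewrite /left_ideal prodvA prodvSl ?subvf. Qed.

Lemma left_ideal_amulr L a : left_ideal L -> left_ideal (amulr a @: L)%VS.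
Proof.
move=> /left_idealP hL; apply/left_idealP => b _ /memv_imgP[x xL ->].
by rewrite amulrE mulrA -amulrE memv_img ?hL.
Qed.

Lemma left_ideal_preim L T a : left_ideal L -> left_ideal T ->
  left_ideal (L :&: (amulr a @^-1: T))%VS.
Proof.
move=> /left_idealP hL /left_idealP hT; apply/left_idealP => b y.
by rewrite !memv_cap -!memv_preim !amulrE => /andP[yL ya]; rewrite hL // -mulrA hT.
Qed.

Lemma limg_amull_sub L g : left_ideal L -> (amull g @: L <= L)%VS.
Proof.
by move=> /left_idealP hL; apply/subvP => _ /memv_imgP[x xL ->]; rewrite amullE hL.
Qed.

Lemma memv_amulr_idem e x : e * e = e -> (x \in (amulr e @: fullv)%VS) = (x * e == x).
Proof.
move=> ee; apply/memv_imgP/eqP => [[y _ ->]|xe]; first by rewrite !amulrE -mulrA ee.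
by exists x; rewrite ?memvf // amulrE xe.
Qed.

Lemma limg_amulr_idem_eq0 e : e * e = e -> (amulr e @: fullv)%VS = 0%VS -> e = 0.
Proof. by move=> ee Ae0; apply/eqP; rewrite -memv0 -Ae0 memv_amulr_idem ee. Qed.

Definition minimal_left_ideal S := [/\ left_ideal S, S != 0%VS &
  forall T, left_ideal T -> (T <= S)%VS -> T = 0%VS \/ T = S].

Lemma minimal_amulr S a : minimal_left_ideal S ->
  (amulr a @: S = 0)%VS \/
  ((S :&: lker (amulr a) = 0)%VS /\ minimal_left_ideal (amulr a @: S)%VS).
Proof.
case=> hS nzS minS.
have hK : left_ideal (S :&: lker (amulr a))%VS.
  move/left_idealP: hS => hS; apply/left_idealP => b y.
  by rewrite !memv_cap !memv_ker !amulrE => /andP[yS /eqP ya]; rewrite hS //= -mulrA ya mulr0.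
case: (minS _ hK (capvSl _ _)) => [K0|KS]; [right|left].
  split=> //; split; first exact: left_ideal_amulr.
    by rewrite -dimv_eq0 limg_dim_eq // dimv_eq0.
  move=> T hT sT.
  case: (minS _ (left_ideal_preim a hS hT) (capvSl _ _)) => [P0|PS]; [left|right].
    apply/eqP; rewrite -subv0; apply/subvP => y yT.
    have /memv_imgP[x xS yx] := subvP sT _ yT.
    have : x \in (S :&: (amulr a @^-1: T))%VS by rewrite memv_cap xS -memv_preim -yx.
    by rewrite P0 memv0 => /eqP x0; rewrite yx x0 linear0 mem0v.
  apply: subv_anti; rewrite sT /=; apply/subvP => y /memv_imgP[x xS ->].
  by move: xS; rewrite -PS memv_cap -memv_preim => /andP[].
apply/eqP; rewrite -subv0; apply/subvP => y /memv_imgP[x xS ->].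
by move: xS; rewrite -KS memv_cap memv_ker => /andP[_ /eqP->]; rewrite mem0v.
Qed.

Lemma exists_minimal_left_ideal L : left_ideal L -> L != 0%VS ->
  exists2 S, minimal_left_ideal S & (S <= L)%VS.
Proof.
elim: {L}(\dim L) {-2}L (leqnn (\dim L)) => [|m IH] L hm hL nzL.
  by move: nzL; rewrite -dimv_eq0; move: hm; rewrite leqn0 => ->.
case: (classic (forall T, left_ideal T -> (T <= L)%VS -> T = 0%VS \/ T = L)) => [h|].
  by exists L.
move/not_all_ex_not=> [T /not_all_ex_not [hT /not_all_ex_not [sTL /not_or_and [T0 TL]]]].
have ltTL : (\dim T < \dim L)%N.
  by rewrite (ltn_leqif (dimv_leqif_eq sTL)); exact/eqP.
have [S mS sST] := IH T ltac:(lia) hT (introN eqP T0).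
by exists S => //; apply: subv_trans sTL.
Qed.

Lemma dim_limg_amull_mulC_le u v L : left_ideal L -> u * v * (u * v) = u * v ->
  (\dim (amull (u * v) @: L) <= \dim (amull (v * u) @: L))%N.
Proof.
move=> /left_idealP hL uvuv; rewrite -(limg_dim_eq (f := amull v)).
  apply: dimvS; apply/subvP => _ /memv_imgP[_ /memv_imgP[x xL ->] ->].
  have -> : amull v (amull (u * v) x) = amull (v * u) (v * x) by rewrite !amullE !mulrA.
  by rewrite memv_img ?hL.
apply/eqP; rewrite -subv0; apply/subvP => y; rewrite memv_cap memv_ker.
case/andP => /memv_imgP[x _ ->]; rewrite !amullE => /eqP vuvx.
have -> : u * v * x = u * (v * (u * v * x)) by rewrite [RHS]mulrA [RHS]mulrA uvuv.
by rewrite vuvx mulr0 mem0v.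
Qed.

Lemma dim_limg_amull_orthogonal e1 e2 L :
    e1 * e1 = e1 -> e2 * e2 = e2 -> e1 * e2 = 0 -> e2 * e1 = 0 -> left_ideal L ->
  \dim (amull (e1 + e2) @: L) = (\dim (amull e1 @: L) + \dim (amull e2 @: L))%N.
Proof.
move=> e11 e22 e12 e21 /left_idealP hL; rewrite -dimv_disjoint_sum; last first.
  apply/eqP; rewrite -subv0; apply/subvP => y.
  rewrite memv_cap => /andP[/memv_imgP[z1 _ ->] /memv_imgP[z2 _]].
  rewrite !amullE => ez; have : e1 * (e1 * z1) = e1 * (e2 * z2) by rewrite ez.
  by rewrite mulrA e11 mulrA e12 mul0r => ->; rewrite mem0v.
congr (\dim _); apply: subv_anti; apply/andP; split; apply/subvP => y.
  by case/memv_imgP => z zL ->; rewrite amullE mulrDl -!amullE memv_add ?memv_img.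
case/memv_addP => _ /memv_imgP[z1 z1L ->] [_ /memv_imgP[z2 z2L ->] ->].
have -> : amull e1 z1 = amull (e1 + e2) (e1 * z1).
  by rewrite !amullE mulrA mulrDl e11 e21 addr0.
have -> : amull e2 z2 = amull (e1 + e2) (e2 * z2).
  by rewrite !amullE mulrA mulrDl e22 e12 add0r.
by rewrite -linearD memv_img // memvD ?hL.
Qed.

Lemma idem_split T C e : e * e = e -> left_ideal T -> left_ideal C ->
    (T :&: C = 0)%VS -> (T + C = amulr e @: fullv)%VS ->
  exists e1 e2, [/\ e = e1 + e2, e1 \in T, e2 \in C,
    {in T, forall x, x * e1 = x /\ x * e2 = 0} &
    {in C, forall x, x * e2 = x /\ x * e1 = 0}].
Proof.
move=> ee hT hC TC TCe; have : e \in (T + C)%VS by rewrite TCe memv_amulr_idem ?ee.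
case/memv_addP=> e1 e1T [e2 e2C e12].
have peirce T' C' e1' e2' : left_ideal T' -> left_ideal C' -> (T' :&: C' = 0)%VS ->
    e1' \in T' -> e2' \in C' -> e = e1' + e2' -> (T' <= T + C)%VS ->
    {in T', forall x, x * e1' = x /\ x * e2' = 0}.
  move=> /left_idealP hT' /left_idealP hC' TC' e1T' e2C' e12' sT' x xT'.
  have xe : x * e = x by apply/eqP; rewrite -memv_amulr_idem // -TCe (subvP sT').
  have xe2 : x * e2' = x - x * e1' by rewrite -{2}xe e12' mulrDr addrAC subrr add0r.
  have : x * e2' \in (T' :&: C')%VS by rewrite memv_cap hC' // xe2 memvB ?hT'.
  rewrite TC' memv0 => /eqP xe20; split=> //; apply/eqP.
  by rewrite -subr_eq0 -oppr_eq0 opprB -xe2 xe20.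
exists e1, e2; split=> //.
- exact: peirce hT hC TC e1T e2C e12 (addvSl _ _).
- by apply: peirce hC hT _ e2C e1T _ (addvSr _ _); rewrite 1?capvC 1?addrC.
Qed.

End LeftIdeals.

Section SimpleAlgebra.
Variables (k : fieldType) (A : falgType k).
Implicit Types (L S T : {vspace A}) (a e g : A).
Hypothesis simpleA : forall U : {vspace A}, (fullv * U <= U)%VS ->
  (U * fullv <= U)%VS -> U = 0%VS \/ U = fullv.

Lemma minimal_mulvf S : minimal_left_ideal S -> (S * fullv)%VS = fullv.
Proof.
case=> hS nzS _; case: (simpleA (U := (S * fullv)%VS)) => [||SA0|//].
- by rewrite prodvA prodvSl.
- by rewrite -prodvA prodvSr ?subvf.
by move: nzS; rewrite -subv0 -SA0 -{1}(prodv1 S) prodvSr ?subvf.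
Qed.

(* Since S0 A = A, some S0 a escapes L + C; being minimal, it meets L + C trivially. *)
Lemma left_ideal_complement L : left_ideal L ->
  exists C, [/\ left_ideal C, (L :&: C = 0)%VS & (L + C = fullv)%VS].
Proof.
move=> hL; have [S0 mS0 _] := exists_minimal_left_ideal (@left_idealf _ A) (fullv_neq0 A).
suff grow m C : left_ideal C -> (L :&: C = 0)%VS ->
    (\dim (fullv : {vspace A}) - \dim (L + C) <= m)%N ->
    exists C', [/\ left_ideal C', (L :&: C' = 0)%VS & (L + C' = fullv)%VS].
  exact: grow (@left_ideal0 _ A) (capv0 _) (leqnn _).
elim: m C => [|m IH] C hC LC hm.
  exists C; split=> //; apply/eqP; rewrite eqEsubv subvf /=.
  by rewrite -(dimv_leqif_sup (subvf (L + C)%VS)) eqn_leq dimvS ?subvf //; lia.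
have [LCf|nLCf] := eqVneq (L + C)%VS fullv; first by exists C.
have [a naLC] : exists a, ~~ (amulr a @: S0 <= L + C)%VS.
  apply: NNPP => /not_ex_all_not all_sub; case/negP: nLCf.
  have sub w : (amulr w @: S0 <= L + C)%VS by apply/negPn/negP; exact: all_sub.
  rewrite eqEsubv subvf /= -(minimal_mulvf mS0).
  by apply/prodvP => u w uS _; rewrite -amulrE (subvP (sub w)) ?memv_img.
case: (minimal_amulr a mS0) => [T0|[_ [hT nzT minT]]]; first by rewrite T0 sub0v in naLC.
set T := (amulr a @: S0)%VS in naLC hT nzT minT.
have TLC : (T :&: (L + C) = 0)%VS.
  have [] // := minT _ (left_idealI hT (left_idealD hL hC)) (capvSl _ _).
  by move=> TLC; rewrite -TLC capvSr in naLC.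
apply: (IH (C + T)%VS); first exact: left_idealD.
  apply/eqP; rewrite -subv0; apply/subvP => x; rewrite memv_cap => /andP[xL].
  case/memv_addP => c cC [t tT xct].
  have : t \in (T :&: (L + C))%VS.
    rewrite memv_cap tT (_ : t = x - c) ?memv_add ?memvN //.
    by rewrite xct addrC addKr.
  by rewrite TLC memv0 => /eqP t0; rewrite -LC memv_cap xL xct t0 addr0 cC.
have dTpos : (0 < \dim T)%N by rewrite lt0n dimv_eq0.
have dsum : \dim (L + (C + T)) = (\dim (L + C) + \dim T)%N.
  by rewrite addvA dimv_disjoint_sum // capvC.
by rewrite dsum; lia.
Qed.

Lemma limg_amulr1 : (amulr 1 @: fullv)%VS = fullv :> {vspace A}.
Proof. by rewrite rmorph1 lim1g. Qed.

Lemma left_ideal_idem L : left_ideal L ->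
  exists2 e, e * e = e & forall x, (x \in L) = (x * e == x).
Proof.
move=> hL; have [C [hC LC LCf]] := left_ideal_complement hL.
rewrite -limg_amulr1 in LCf.
have [e1 [e2 [_ e1T _ e1L _]]] := idem_split (mulr1 1) hL hC LC LCf.
have e1e1 : e1 * e1 = e1 by case: (e1L e1 e1T).
move/left_idealP: hL => hL; exists e1 => // x.
by apply/idP/eqP => [/e1L[] | <-]; rewrite ?hL.
Qed.

Lemma left_ideal_rel_complement T L : left_ideal T -> left_ideal L -> (T <= L)%VS ->
  exists C, [/\ left_ideal C, (T :&: C = 0)%VS & (T + C = L)%VS].
Proof.
move=> hT hL sTL; have [C [hC TC TCf]] := left_ideal_complement hT.
exists (C :&: L)%VS; split; first exact: left_idealI.
  by rewrite capvA TC cap0v.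
apply: subv_anti; rewrite subv_add sTL capvSr /=.
apply/subvP => x xL; have : x \in (T + C)%VS by rewrite TCf memvf.
case/memv_addP => t tT [c cC xtc]; rewrite xtc memv_add // memv_cap cC /=.
have -> : c = x - t by rewrite xtc addrC addKr.
by rewrite memvB // (subvP sTL).
Qed.

Section MinimalCopies.
Variable S0 : {vspace A}.
Hypothesis mS0 : minimal_left_ideal S0.

(* The copy is S0 (b x) for a nonzero x in L: as S0 A = A, not every S0 b x vanishes. *)
Lemma minimal_copy_sub L : left_ideal L -> L != 0%VS ->
  exists a, [/\ (S0 :&: lker (amulr a) = 0)%VS, minimal_left_ideal (amulr a @: S0)%VS &
               (amulr a @: S0 <= L)%VS].
Proof.
move=> /left_idealP hL nzL; set x := vpick L.
have xL : x \in L := memv_pick L.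
have [b nb] : exists b, (amulr (b * x) @: S0)%VS != 0%VS.
  apply: NNPP => /not_ex_all_not S0bx0; case/negP: nzL; rewrite -vpick0 -/x.
  have : (S0 * fullv <= lker (amulr x))%VS.
    apply/prodvP => u w uS _; rewrite memv_ker amulrE -mulrA.
    have /eqP Swx0 : (amulr (w * x) @: S0)%VS == 0%VS by apply/negPn/negP; exact: S0bx0.
    by rewrite -amulrE -memv0 -Swx0 memv_img.
  by rewrite minimal_mulvf // => /subvP/(_ 1 (memvf _)); rewrite memv_ker amulrE mul1r.
case: (minimal_amulr (b * x) mS0) => [S0bx0|[inj mT]]; first by rewrite S0bx0 eqxx in nb.
exists (b * x); split=> //; apply/subvP => _ /memv_imgP[u uS ->].
by rewrite amulrE mulrA hL.
Qed.

(* Split L as a copy S0 a (on which left multiplication by g acts as on S0) plus a smaller complement. *)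
Lemma dim_limg_amull_minimal g L : left_ideal L ->
  (\dim (amull g @: L) * \dim S0 = \dim L * \dim (amull g @: S0))%N.
Proof.
elim: {L}(\dim L) {-2}L (leqnn (\dim L)) => [|m IH] L hm hL.
  by move: hm; rewrite leqn0 dimv_eq0 => /eqP->; rewrite limg0 dimv0.
have [->|nzL] := eqVneq L 0%VS; first by rewrite limg0 !dimv0.
have [a [inj [hT nzT _] sTL]] := minimal_copy_sub hL nzL.
set T := (amulr a @: S0)%VS in inj hT nzT sTL.
have [C [hC TC TCL]] := left_ideal_rel_complement hT hL sTL.
have hS0 : left_ideal S0 by case: mS0.
have dT : \dim T = \dim S0 by rewrite limg_dim_eq.
have dL : \dim L = (\dim T + \dim C)%N by rewrite -TCL dimv_disjoint_sum.
have gT : (amull g @: T)%VS = (amulr a @: (amull g @: S0))%VS.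
  by rewrite -!limg_comp; congr (_ @: _)%VS; apply/lfunP => y; rewrite !comp_lfunE !lfunE /= mulrA.
have dgT : \dim (amull g @: T) = \dim (amull g @: S0).
  rewrite gT limg_dim_eq //; apply/eqP; rewrite -subv0 -inj.
  by rewrite capvS ?limg_amull_sub.
have dgL : \dim (amull g @: L) = (\dim (amull g @: T) + \dim (amull g @: C))%N.
  rewrite -TCL limgD dimv_disjoint_sum //; apply/eqP; rewrite -subv0 -TC.
  by rewrite capvS ?limg_amull_sub.
have dTpos : (0 < \dim T)%N by rewrite lt0n dimv_eq0.
have IHC := IH C ltac:(move: hm; rewrite dL; lia) hC.
by rewrite dgL dgT dL dT mulnDl IHC; nia.
Qed.

Variable h : A.
Hypothesis hh : h * h = h.
Hypothesis hS0 : forall x, (x \in S0) = (x * h == x).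

(* With e1 = u0 a (u0 in S0), take u = e1 u0 and v = h a e1. *)
Lemma minimal_copy_idem_factor a e1 : (S0 :&: lker (amulr a) = 0)%VS ->
    e1 \in (amulr a @: S0)%VS -> {in (amulr a @: S0)%VS, forall x, x * e1 = x} ->
  exists u v, u * v = e1 /\ v * u = h.
Proof.
move=> inj /memv_imgP[u0 u0S]; rewrite amulrE => e1u0 e1id.
have /left_idealP lS0 : left_ideal S0 by case: mS0.
have hS : h \in S0 by rewrite hS0 hh.
have e1e1 : e1 * e1 = e1 by rewrite e1id // e1u0 -amulrE memv_img.
set v := h * a * e1; set u := e1 * u0.
have xv x : x \in S0 -> x * v = x * a.
  move=> xS; rewrite /v !mulrA (eqP (etrans (esym (hS0 x)) xS)).
  by rewrite e1id // -amulrE memv_img.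
exists u, v; split; first by rewrite /u -mulrA xv // -e1u0 e1e1.
have : v * u - h \in (S0 :&: lker (amulr a))%VS.
  rewrite memv_cap memvB ?lS0 //= memv_ker amulrE mulrBl -!xv ?memvB ?lS0 //.
  by rewrite -mulrA /u -mulrA xv // -e1u0 e1e1 /v -mulrA e1e1 !mulrA hh subrr.
by rewrite inj memv0 subr_eq0 => /eqP.
Qed.

(* Peel a copy S0 a off A e, split e = e1 + e2 along it, and compare e1 S0 with h S0. *)
Lemma dim_limg_amull_idem_minimal e : e * e = e ->
  (\dim (amull e @: S0) * \dim S0 =
   \dim (amulr e @: fullv) * \dim (amull h @: S0))%N.
Proof.
have [lS0 nzS0 _] := mS0; have dS0pos : (0 < \dim S0)%N by rewrite lt0n dimv_eq0.
move=> ee; move: (leqnn (\dim (amulr e @: fullv))); move: {2}(\dim _) => m.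
elim: m e ee => [|m IH] e ee hm;
  have [L0|nzL] := eqVneq (amulr e @: fullv)%VS 0%VS;
  try by rewrite L0 (limg_amulr_idem_eq0 ee L0) linear0 lim0g !dimv0.
  by move: hm; rewrite leqn0 dimv_eq0 (negbTE nzL).
have hL := left_ideal_amulr e (@left_idealf _ A).
have [a [inj [hT nzT _] sTL]] := minimal_copy_sub hL nzL.
set T := (amulr a @: S0)%VS in inj hT nzT sTL.
have [C [hC TC TCL]] := left_ideal_rel_complement hT hL sTL.
have [e1 [e2 [e12 e1T e2C actT actC]]] := idem_split ee hT hC TC TCL.
have [e1e1 e1e2] := actT e1 e1T.
have [e2e2 e2e1] := actC e2 e2C.
have CE : C = (amulr e2 @: fullv)%VS.
  apply/vspaceP => x; rewrite memv_amulr_idem //.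
  by apply/idP/eqP => [/actC[] // | <-]; apply: (elimT (left_idealP _) hC).
have dL : \dim (amulr e @: fullv) = (\dim S0 + \dim (amulr e2 @: fullv))%N.
  by rewrite -TCL dimv_disjoint_sum // -CE (limg_dim_eq inj).
have de : \dim (amull e @: S0) = (\dim (amull e1 @: S0) + \dim (amull e2 @: S0))%N.
  by rewrite e12 dim_limg_amull_orthogonal.
have de1 : \dim (amull e1 @: S0) = \dim (amull h @: S0).
  have [u [v [uv vu]]] := minimal_copy_idem_factor inj e1T (fun x xT => (actT x xT).1).
  apply/eqP; rewrite eqn_leq -uv -vu !(dim_limg_amull_mulC_le lS0) //.
  - by rewrite vu.
  - by rewrite uv.
have IHe2 := IH e2 e2e2 ltac:(move: hm; rewrite dL; lia).
by rewrite de de1 dL mulnDl IHe2; nia.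
Qed.

End MinimalCopies.

Lemma dim_limg_amull_amulr_idem e : e * e = e ->
  \dim (amull e @: fullv) = \dim (amulr e @: fullv).
Proof.
move=> ee; have [S0 mS0 _] := exists_minimal_left_ideal (@left_idealf _ A) (fullv_neq0 A).
have [lS0 nzS0 _] := mS0; have [h hh hS0] := left_ideal_idem lS0.
have dS0pos : (0 < \dim S0)%N by rewrite lt0n dimv_eq0.
have dA := dim_limg_amull_idem_minimal mS0 hh hS0 (mulr1 1).
rewrite amull1 lim1g limg_amulr1 in dA.
have Ae := dim_limg_amull_minimal mS0 e (@left_idealf _ A).
have eS0 := dim_limg_amull_idem_minimal mS0 hh hS0 ee.
have dS0sq_pos : (0 < \dim S0 * \dim S0)%N by rewrite muln_gt0 dS0pos.
apply/eqP; rewrite -(eqn_pmul2r dS0sq_pos).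
by rewrite mulnA Ae -mulnA eS0 mulnCA -dA.
Qed.

Lemma dim_limg_amull_complement_idem e n i L : e * e = e ->
    \dim (fullv : {vspace A}) = (n ^ 2)%N -> \dim (amulr e @: fullv) = (n * i)%N ->
    left_ideal L ->
  (n * \dim (amull (1 - e) @: L) = (n - i) * \dim L)%N.
Proof.
move=> ee dimA dAe hL; set f := 1 - e.
have ff : f * f = f by rewrite /f mulrBl mul1r mulrBr mulr1 ee subrr subr0.
have ef : e * f = 0 by rewrite /f mulrBr mulr1 ee subrr.
have fe : f * e = 0 by rewrite /f mulrBl mul1r ee subrr.
have [S0 mS0 _] := exists_minimal_left_ideal (@left_idealf _ A) (fullv_neq0 A).
have dS0pos : (0 < \dim S0)%N by rewrite lt0n dimv_eq0; case: mS0.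
have npos : (0 < n)%N.
  by rewrite lt0n; apply: contra (fullv_neq0 A) => /eqP n0; rewrite -dimv_eq0 dimA n0.
have dfA : \dim (amull f @: fullv) = (n * (n - i))%N.
  have := dim_limg_amull_orthogonal ee ff ef fe (@left_idealf _ A).
  rewrite /f addrC subrK amull1 lim1g dim_limg_amull_amulr_idem // dimA dAe => dsum.
  by rewrite mulnBr mulnn dsum addKn.
have fL := dim_limg_amull_minimal mS0 f hL.
have fA := dim_limg_amull_minimal mS0 f (@left_idealf _ A).
have nfS0 : ((n - i) * \dim S0 = n * \dim (amull f @: S0))%N.
  apply/eqP; rewrite -(eqn_pmul2l npos) mulnA -dfA fA dimA.
  by rewrite expnS expn1 mulnA.
apply/eqP; rewrite -(eqn_pmul2r dS0pos) -mulnA fL mulnCA -nfS0.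
by rewrite mulnCA mulnA.
Qed.

End SimpleAlgebra.

Lemma increasing_ge_add (r : nat) (i : nat -> nat) :
    (forall j, (1 <= j < r)%N -> (i j < i j.+1)%N) ->
  forall j, (1 <= j <= r)%N -> (i 1 + (j - 1) <= i j)%N.
Proof.
move=> hinc; elim=> [|j IH] // /andP[_ jr]; case: j IH jr => [|j] IH jr; first by rewrite addn0.
by have := hinc j.+1 ltac:(lia); have := IH ltac:(lia); lia.
Qed.

Lemma subv_path_min (K : fieldType) (vT : vectType K) (U : {vspace vT}) s :
  path (fun V W : {vspace vT} => (V <= W)%VS) U s -> {in s, forall V, (U <= V)%VS}.
Proof.
move=> p; apply/allP; apply: order_path_min p => V W Z; exact: subv_trans.
Qed.

(* With I1 = A e and f = 1 - e, the annihilator of I1 is f A, and I1° L = f L for a left ideal L. *)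
Section Annihilator.
Variables (k : fieldType) (A : falgType k).
Hypothesis simpleA : forall U : {vspace A}, (fullv * U <= U)%VS ->
  (U * fullv <= U)%VS -> U = 0%VS \/ U = fullv.
Variables (I1 : {vspace A}) (e : A).
Hypotheses (ee : e * e = e) (I1E : forall x, (x \in I1) = (x * e == x)).
Implicit Types (L J : {vspace A}) (x : A).

Let f := 1 - e.
Let ff : f * f = f. Proof. by rewrite /f mulrBl mul1r mulrBr mulr1 ee subrr subr0. Qed.
Let ef : e * f = 0. Proof. by rewrite /f mulrBr mulr1 ee subrr. Qed.

Lemma memv_rann_idem x : (x \in rann I1) = (f * x == x).
Proof.
apply/rannP/eqP => [ann | fx u].
  by rewrite /f mulrBl mul1r ann ?subr0 // I1E ee.
by rewrite I1E => /eqP <-; rewrite -fx !mulrA -(mulrA u) ef mulr0 mul0r.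
Qed.

Lemma rann_mul_left_ideal L : left_ideal L -> (rann I1 * L)%VS = (amull f @: L)%VS.
Proof.
move=> /left_idealP hL; apply: subv_anti; apply/andP; split.
  apply/prodvP => u v; rewrite memv_rann_idem => /eqP <- vL.
  by rewrite -mulrA -amullE memv_img ?hL.
apply/subvP => _ /memv_imgP[x xL ->]; rewrite amullE memv_mul //.
by rewrite memv_rann_idem ff.
Qed.

Lemma rann_mulvf : (rann I1 * fullv <= rann I1)%VS.
Proof. by apply/prodvP => u v; rewrite !memv_rann_idem => /eqP <- _; rewrite !mulrA ff. Qed.

Lemma fullv_mul_rann : I1 != fullv -> (fullv * rann I1)%VS = fullv.
Proof.
move=> nI1f; case: (simpleA (U := (fullv * rann I1)%VS)) => [||A_rann0|//].
- by rewrite prodvA prodvSl ?subvf.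
- by rewrite -prodvA prodvSr ?rann_mulvf.
have : f \in (fullv * rann I1)%VS by rewrite -[f]mul1r memv_mul ?memvf ?memv_rann_idem ?ff.
rewrite A_rann0 memv0 subr_eq0 => /eqP e1; case/negP: nI1f.
by apply/eqP/vspaceP => x; rewrite I1E -e1 mulr1 eqxx memvf.
Qed.

Lemma left_ideal_lift J : left_ideal (I1 + fullv * J)%VS.
Proof.
rewrite left_idealD ?left_ideal_fullM //.
by apply/left_idealP => a x; rewrite !I1E -mulrA => /eqP->.
Qed.

(* x = x e + x f, and x f = 1 (f (x f)) with f (x f) in I1° L. *)
Lemma left_ideal_lift_rann_mul L : I1 != fullv -> left_ideal L -> (I1 <= L)%VS ->
  L = (I1 + fullv * (rann I1 * L))%VS.
Proof.
move=> nI1f hL sI1L; apply: subv_anti; apply/andP; split; last first.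
  rewrite subv_add sI1L /=; apply: (subv_trans (prodvSr _ _) hL).
  by rewrite rann_mul_left_ideal //; exact: limg_amull_sub.
apply/subvP => x xL; have -> : x = x * e + x * f by rewrite -mulrDr /f addrC subrK mulr1.
have xeI1 : x * e \in I1 by rewrite I1E -mulrA ee.
rewrite memv_add // -[x * f]mul1r prodvA fullv_mul_rann // memv_mul ?memvf //.
by rewrite /f mulrBr mulr1 memvB // (subvP sI1L).
Qed.

Lemma rann_mul_lift J : (rann I1 * I1 <= J)%VS -> (J <= rann I1)%VS ->
  (rann I1 * J <= J)%VS -> (rann I1 * (I1 + fullv * J))%VS = J.
Proof.
move=> sJ Jrann rannJ; apply: subv_anti; apply/andP; split.
  rewrite prodvDr subv_add sJ /= prodvA; apply: subv_trans rannJ.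
  exact: prodvSl rann_mulvf.
apply/subvP => j jJ; have fj : f * j = j by apply/eqP; rewrite -memv_rann_idem (subvP Jrann).
rewrite -fj -[j in f * j]mul1r memv_mul ?memv_rann_idem ?ff //.
by rewrite (subvP (addvSr _ _)) // memv_mul ?memvf.
Qed.

Lemma lift_rann_mul_self : left_ideal I1 -> (I1 + fullv * (rann I1 * I1))%VS = I1.
Proof.
move=> hI1; apply/eqP; rewrite eqEsubv addvSl andbT subv_add subvv /= prodvA.
exact: subv_trans (prodvSl _ (subvf _)) hI1.
Qed.

End Annihilator.

Section Flags.
Variables (k : fieldType) (A : falgType k).
Hypothesis simpleA : forall U : {vspace A}, (fullv * U <= U)%VS ->
  (U * fullv <= U)%VS -> U = 0%VS \/ U = fullv.
Variables (n r : nat) (i : nat -> nat) (I1 : {vspace A}) (e : A).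
Hypotheses (dimA : \dim {:A} = (n ^ 2)%N) (hr : (1 < r)%N)
  (hinc : forall j, (1 <= j < r)%N -> (i j < i j.+1)%N) (hir : (i r <= n)%N).
Hypotheses (hI1 : left_ideal I1) (dimI1 : \dim I1 = (n * i 1)%N).
Hypotheses (ee : e * e = e) (I1E : forall x, (x \in I1) = (x * e == x)).
Implicit Types (L J : {vspace A}) (s : seq {vspace A}).

Let i1_lt_n : (i 1 < n)%N.
Proof. by have := increasing_ge_add hinc (j := r) ltac:(lia); lia. Qed.

Let i1_le t : (t < r.-1)%N -> (i 1 <= i t.+2)%N.
Proof. by move=> tr; have := increasing_ge_add hinc (j := t.+2) ltac:(lia); lia. Qed.

Let n_gt0 : (0 < n)%N. Proof. by case: n i1_lt_n. Qed.

Let I1_neq_fullv : I1 != fullv.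
Proof.
apply/eqP => I1f; have := i1_lt_n; move: dimI1; rewrite I1f dimA -mulnn; nia.
Qed.

Lemma dim_rann_mul L : left_ideal L ->
  (n * \dim (rann I1 * L) = (n - i 1) * \dim L)%N.
Proof.
move=> hL; rewrite (rann_mul_left_ideal ee I1E hL).
apply: dim_limg_amull_complement_idem => //; rewrite -dimI1.
by congr (\dim _); apply/vspaceP => x; rewrite memv_amulr_idem // I1E.
Qed.

Lemma dim_rann_mul_eq L m : left_ideal L -> \dim L = (n * m)%N ->
  \dim (rann I1 * L) = ((n - i 1) * m)%N.
Proof.
move=> hL dL; apply/eqP; rewrite -(eqn_pmul2l n_gt0) dim_rann_mul // dL.
by rewrite mulnCA.
Qed.

Lemma flag_map_quot_flag s : ideal_flag n r i I1 s -> quot_flag n r i I1 (flag_map I1 s).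
Proof.
case=> sz p al dm; have rannM L : (rann I1 * L <= rann I1)%VS.
  by apply: subv_trans (rann_mulvf ee I1E); rewrite prodvSr ?subvf.
split.
- by rewrite size_map.
- by rewrite /flag_map (path_map I1); apply: sub_path p => U V /=; exact: prodvSr.
- by rewrite all_map; apply/allP => J _ /=; rewrite rannM prodvA prodvSl.
move=> t ht; rewrite /flag_map (nth_map 0%VS) ?sz //.
have hI : left_ideal (nth 0%VS s t) by apply: (allP al); rewrite mem_nth ?sz.
rewrite (dim_rann_mul_eq hI (dm t ht)) (dim_rann_mul_eq hI1 dimI1).
by rewrite -mulnDr subnKC ?i1_le.
Qed.

Lemma flag_map_inj s s' : ideal_flag n r i I1 s -> ideal_flag n r i I1 s' ->
  flag_map I1 s = flag_map I1 s' -> s = s'.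
Proof.
case=> sz p al _ [sz' p' al' _] ss'; apply: (eq_from_nth (x0 := 0%VS)) => [|t ht].
  by rewrite sz sz'.
have ht' : (t < size s')%N by rewrite sz' -sz.
have := congr1 (nth 0%VS ^~ t) ss'; rewrite /flag_map /= !(nth_map 0%VS) // => fss'.
have recover := left_ideal_lift_rann_mul simpleA ee I1E I1_neq_fullv.
have st := mem_nth 0%VS ht; have s't := mem_nth 0%VS ht'.
rewrite (recover _ (allP al _ st) (subv_path_min p st)) fss'.
by rewrite -recover ?(allP al') ?(subv_path_min p').
Qed.

Lemma flag_map_surj s' : quot_flag n r i I1 s' ->
  exists2 s, ideal_flag n r i I1 s & flag_map I1 s = s'.
Proof.
case=> sz p al dm; pose lift J := (I1 + fullv * J)%VS.
have liftK J : J \in s' -> (rann I1 * lift J)%VS = J.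
  move=> Js; have /andP[Jrann rannJ] := allP al J Js.
  by rewrite /lift (rann_mul_lift ee I1E (subv_path_min p Js)).
exists (map lift s'); last first.
  by rewrite /flag_map -map_comp -[RHS]map_id; apply/eq_in_map => J /liftK.
split.
- by rewrite size_map.
- have liftI1 : lift (rann I1 * I1)%VS = I1 := lift_rann_mul_self hI1.
  rewrite -[X in path _ X]liftI1 path_map.
  by apply: sub_path p => U V /= sUV; rewrite addvS ?prodvSr.
- by rewrite all_map; apply/allP => J _ /=; exact: left_ideal_lift.
move=> t ht; rewrite (nth_map 0%VS) ?sz //.
have Js : nth 0%VS s' t \in s' by rewrite mem_nth ?sz.
have := dim_rann_mul (left_ideal_lift I1E (nth 0%VS s' t)).
rewrite liftK // dm // (dim_rann_mul_eq hI1 dimI1) -mulnDr subnKC ?i1_le // => dlift.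
apply/eqP; rewrite -(@eqn_pmul2l (n - i 1)) ?subn_gt0 // -dlift.
by rewrite mulnCA.
Qed.

End Flags.

Theorem mainTheorem7 (k : fieldType) (A : falgType k) (n : nat)
    (hA : central_simple A) (hdeg : \dim {:A} = (n ^ 2)%N)
    (r : nat) (hr : (1 < r)%N) (i : nat -> nat)
    (hi1 : (1 <= i 1)%N)
    (hinc : forall j, (1 <= j < r)%N -> (i j < i j.+1)%N)
    (hir : (i r <= n)%N)
    (I1 : {vspace A}) (hI1 : left_ideal I1) (hdimI1 : \dim I1 = (n * i 1)%N) :
  [/\ forall s, ideal_flag n r i I1 s -> quot_flag n r i I1 (flag_map I1 s),
      forall s s', ideal_flag n r i I1 s -> ideal_flag n r i I1 s' ->
        flag_map I1 s = flag_map I1 s' -> s = s' &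
      forall s', quot_flag n r i I1 s' ->
        exists2 s, ideal_flag n r i I1 s & flag_map I1 s = s'].
Proof.
case: hA => _ simpleA; have [e ee I1E] := left_ideal_idem simpleA hI1.
split.
- exact: (flag_map_quot_flag simpleA hdeg hr hinc hir hI1 hdimI1 ee I1E).
- exact: (flag_map_inj simpleA hdeg hr hinc hir hI1 hdimI1 ee I1E).
- exact: (flag_map_surj simpleA hdeg hr hinc hir hI1 hdimI1 ee I1E).
Qed.
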